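(* Let $V$ be a real vector space with two inner products $\langle\cdot,\cdot\rangle_1$ and $\langle\cdot,\cdot\rangle_2$, and let $\theta_0\in(0,\pi)$. Suppose that for all nonzero $x,y\in V$, the angle between $x$ and $y$ with respect to $\langle\cdot,\cdot\rangle_1$ is $\theta_0$ if and only if the angle between them with respect to $\langle\cdot,\cdot\rangle_2$ is $\theta_0$. Then there is $c>0$ such that $\langle x,y\rangle_2=c\langle x,y\rangle_1$ for all $x,y\in V$.
   Context: For an inner product $\langle\cdot,\cdot\rangle$ on a real vector space with norm $\|x\|=\sqrt{\langle x,x\rangle}$, the angle between nonzero vectors $x,y$ is the unique $\theta\in[0,\pi]$ with $\cos\theta=\langle x,y\rangle/(\|x\|\|y\|)$. *)

From HB Require Import structures.
From mathcomp Require Import all_boot all_order all_algebra.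
From mathcomp Require Import all_classical all_reals all_analysis.
Set Implicit Arguments. Unset Strict Implicit. Unset Printing Implicit Defensive.
Import Order.TTheory GRing.Theory Num.Theory.
Local Open Scope ring_scope.

Definition is_inner_product (R : realType) (V : lmodType R) (ip : V -> V -> R) : Prop :=
  [/\ (forall x y : V, ip x y = ip y x),
      (forall (a : R) (x y z : V), ip (a *: x + y) z = a * ip x z + ip y z)
    & (forall x : V, x != 0 -> 0 < ip x x)].

Definition ip_norm (R : realType) (V : lmodType R) (ip : V -> V -> R) (x : V) : R :=
  Num.sqrt (ip x x).

Definition ip_angle (R : realType) (V : lmodType R) (ip : V -> V -> R) (x y : V) : R :=
  acos (ip x y / (ip_norm ip x * ip_norm ip y)).

From HB Require Import structures.
From mathcomp Require Import all_boot all_order all_algebra.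
From mathcomp Require Import all_classical all_reals all_analysis.
From mathcomp Require Import ring lra.
Import Order.TTheory GRing.Theory Num.Theory.
Local Open Scope ring_scope.

(* If x is 1-orthogonal to y and k = cos theta0, s = sin theta0, the two vectors
   k |y|_1 x +- s |x|_1 y both make the angle theta0 with x for the first inner
   product, hence for the second.  Comparing the two resulting equations forces
   <x, y>_2 = 0, so the second inner product preserves orthogonality.  Then
   x + y is 2-orthogonal to x - y whenever |x|_1 = |y|_1, so |x|_2 depends only
   on |x|_1 and by homogeneity |x|_2^2 = c |x|_1^2; polarization concludes. *)

Section InnerProduct.
Context {R : realType} {V : lmodType R} {ip : V -> V -> R}.
Hypothesis ipP : is_inner_product ip.

Lemma ipC x y : ip x y = ip y x.
Proof. by case: ipP. Qed.

Lemma ip0l z : ip 0 z = 0.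
Proof.
case: ipP => _ ip_lin _.
by have := ip_lin 1 0 0 z; rewrite scaler0 addr0 mul1r => h; lra.
Qed.

Lemma ipDl x y z : ip (x + y) z = ip x z + ip y z.
Proof. by case: ipP => _ ip_lin _; rewrite -[x]scale1r ip_lin mul1r scale1r. Qed.

Lemma ipZl a x z : ip (a *: x) z = a * ip x z.
Proof. by case: ipP => _ ip_lin _; have := ip_lin a x 0 z; rewrite !addr0 ip0l addr0. Qed.

Lemma ipDr x y z : ip z (x + y) = ip z x + ip z y.
Proof. by rewrite ipC ipDl ipC (ipC y). Qed.

Lemma ipZr a x z : ip z (a *: x) = a * ip z x.
Proof. by rewrite ipC ipZl ipC. Qed.

Lemma ip0r z : ip z 0 = 0.
Proof. by rewrite ipC ip0l. Qed.

Lemma ipNr x z : ip z (- x) = - ip z x.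
Proof. by rewrite -scaleN1r ipZr mulN1r. Qed.

Lemma ip_gt0 {x} : x != 0 -> 0 < ip x x.
Proof. by case: ipP => _ _; apply. Qed.

Lemma ip_ge0 x : 0 <= ip x x.
Proof. by have [->|/ip_gt0/ltW//] := eqVneq x 0; rewrite ip0l. Qed.

Lemma ip_norm_gt0 {x} : x != 0 -> 0 < ip_norm ip x.
Proof. by move=> x0; rewrite sqrtr_gt0 ip_gt0. Qed.

Lemma sqr_ip_norm x : ip_norm ip x ^+ 2 = ip x x.
Proof. by rewrite sqr_sqrtr // ip_ge0. Qed.

Lemma ipDD x y : ip (x + y) (x + y) = ip x x + 2 * ip x y + ip y y.
Proof. by rewrite !ipDl !ipDr (ipC y x); ring. Qed.

Lemma cauchy_schwarz x y : ip x y ^+ 2 <= ip x x * ip y y.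
Proof.
have [->|x0] := eqVneq x 0; first by rewrite !ip0l expr2 !mul0r.
have xx_gt0 := ip_gt0 x0.
set a := - (ip x y / ip x x).
have := ip_ge0 (a *: x + y).
rewrite ipDl !ipDr !ipZl !ipZr (ipC y x).
have -> : a * (a * ip x x) + a * ip x y + (a * ip x y + ip y y)
   = ip y y - ip x y ^+ 2 / ip x x by rewrite /a; field; rewrite gt_eqF.
by rewrite subr_ge0 ler_pdivrMr // mulrC.
Qed.

Lemma ip_cos_ratio_bound x y : x != 0 -> y != 0 ->
  -1 <= ip x y / (ip_norm ip x * ip_norm ip y) <= 1.
Proof.
move=> x0 y0; have nxy_gt0 := mulr_gt0 (ip_norm_gt0 x0) (ip_norm_gt0 y0).
rewrite -ler_norml normrM normfV (gtr0_norm nxy_gt0) ler_pdivrMr // mul1r.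
rewrite /ip_norm -sqrtrM ?ip_ge0 // -sqrtr_sqr ler_sqrt ?mulr_ge0 ?ip_ge0 //.
exact: cauchy_schwarz.
Qed.

Lemma ip_angleP {x y th} : x != 0 -> y != 0 -> 0 <= th <= pi ->
  ip_angle ip x y = th <-> ip x y = cos th * (ip_norm ip x * ip_norm ip y).
Proof.
move=> x0 y0 th_itv.
have nxy_neq0 : ip_norm ip x * ip_norm ip y != 0.
  exact: mulf_neq0 (lt0r_neq0 (ip_norm_gt0 x0)) (lt0r_neq0 (ip_norm_gt0 y0)).
rewrite /ip_angle; split => [<-|->]; last first.
  by rewrite mulfK // cosK // in_itv.
by rewrite acosK ?divfK // in_itv /= ip_cos_ratio_bound.
Qed.

(* Squaring the two cosine equations (e = 1, -1) and subtracting leaves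
   4 k p q <x,x> (1 - k^2) <x,y> = 0; the case k = 0 is immediate. *)
Lemma ip_cos_pm_eq0 x y k p q : x != 0 -> k ^+ 2 != 1 -> p != 0 -> q != 0 ->
  (forall e, e ^+ 2 = 1 -> let v := (k * p) *: x + (e * q) *: y in
     ip x v = k * (ip_norm ip x * ip_norm ip v)) ->
  ip x y = 0.
Proof.
move=> x0 k2_neq1 p0 q0 hcos.
have [k0|k0] := eqVneq k 0.
  have /= := hcos 1 (expr1n _ _); rewrite k0 !mul0r scale0r add0r mul1r ipZr.
  by move/eqP; rewrite mulf_eq0 (negPf q0) => /eqP.
have sqr_cos e : e ^+ 2 = 1 -> (k * p * ip x x + e * q * ip x y) ^+ 2 =
    k ^+ 2 * ip x x * ((k * p) ^+ 2 * ip x x + 2 * (k * p) * (e * q) * ip x y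
                        + (e * q) ^+ 2 * ip y y).
  move=> e2; have /= /(congr1 (fun t => t ^+ 2)) := hcos e e2.
  rewrite !exprMn !sqr_ip_norm ipDD ipDr !ipZl !ipZr => ->; ring.
have := sqr_cos 1 (expr1n _ _); have := sqr_cos (-1) (etrans (sqrrN 1) (expr1n _ _)).
move=> em ep; have : 4 * k * p * q * ip x x * (1 - k ^+ 2) * ip x y = 0.
  by apply/eqP; rewrite -subr_eq0; apply/eqP; move: ep em; lra.
move/eqP; rewrite !mulf_eq0 pnatr_eq0 (negPf k0) (negPf p0) (negPf q0).
by rewrite (gt_eqF (ip_gt0 x0)) subr_eq0 (eq_sym 1) (negPf k2_neq1) => /eqP.
Qed.

End InnerProduct.

Section OrthogonalPair.
Context {R : realType} {V : lmodType R} {ip : V -> V -> R}.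
Hypothesis ipP : is_inner_product ip.
Variables (x y : V) (th e : R).
Hypotheses (xy0 : ip x y = 0) (x0 : x != 0) (y0 : y != 0) (e2 : e ^+ 2 = 1).

Let v := (cos th * ip_norm ip y) *: x + (e * (sin th * ip_norm ip x)) *: y.

Lemma ip_sqr_cos_sin : ip v v = (ip_norm ip x * ip_norm ip y) ^+ 2.
Proof.
rewrite /v (ipDD ipP) !(ipZl ipP) !(ipZr ipP) xy0.
rewrite -(sqr_ip_norm ipP x) -(sqr_ip_norm ipP y).
rewrite -[RHS]mul1r -(cos2Dsin2 th) -[sin th ^+ 2]mul1r -e2; ring.
Qed.

Lemma cos_sin_neq0 : v != 0.
Proof.
apply/eqP => v0; have := ip_sqr_cos_sin; rewrite v0 (ip0l ipP) => /esym/eqP.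
by rewrite sqrf_eq0 mulf_eq0 (gt_eqF (ip_norm_gt0 ipP x0)) (gt_eqF (ip_norm_gt0 ipP y0)).
Qed.

Lemma ip_norm_cos_sin : ip_norm ip v = ip_norm ip x * ip_norm ip y.
Proof. by rewrite [LHS]/ip_norm ip_sqr_cos_sin sqrtr_sqr ger0_norm ?mulr_ge0 ?sqrtr_ge0. Qed.

Lemma ip_angle_cos_sin : 0 <= th <= pi -> ip_angle ip x v = th.
Proof.
move=> th_itv; rewrite (ip_angleP ipP x0 cos_sin_neq0 th_itv) ip_norm_cos_sin.
rewrite /v (ipDr ipP) !(ipZr ipP) xy0 -(sqr_ip_norm ipP x); ring.
Qed.

End OrthogonalPair.

Lemma angle_preserving_orthogonal (R : realType) (V : lmodType R)
    (ip1 ip2 : V -> V -> R) (th : R) :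
  is_inner_product ip1 -> is_inner_product ip2 -> 0 < th -> th < pi ->
  (forall x y : V, x != 0 -> y != 0 ->
     (ip_angle ip1 x y = th <-> ip_angle ip2 x y = th)) ->
  forall x y, ip1 x y = 0 -> ip2 x y = 0.
Proof.
move=> ip1P ip2P th_gt0 th_ltpi angle_eq x y xy0.
have [->|x0] := eqVneq x 0; first by rewrite (ip0l ip2P).
have [->|y0] := eqVneq y 0; first by rewrite (ip0r ip2P).
have th_itv : 0 <= th <= pi by rewrite !ltW.
have sin_gt0 : 0 < sin th by apply: sin_gt0_pi; rewrite th_gt0.
apply: (ip_cos_pm_eq0 ip2P x y (cos th) (ip_norm ip1 y) (sin th * ip_norm ip1 x) x0).
- by rewrite -(cos2Dsin2 th) eq_sym -subr_eq0 addrC addKr sqrf_eq0 gt_eqF.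
- exact: lt0r_neq0 (ip_norm_gt0 ip1P y0).
- exact: mulf_neq0 (lt0r_neq0 sin_gt0) (lt0r_neq0 (ip_norm_gt0 ip1P x0)).
move=> e e2 /=; have v0 := cos_sin_neq0 ip1P _ _ th e xy0 x0 y0 e2.
apply/(ip_angleP ip2P x0 v0 th_itv)/(angle_eq _ _ x0 v0).
exact: ip_angle_cos_sin.
Qed.

Section Proportional.
Context {R : realType} {V : lmodType R} {ip1 ip2 : V -> V -> R}.
Hypotheses (ip1P : is_inner_product ip1) (ip2P : is_inner_product ip2).

Lemma ip_eq_scale_of_sqr c : (forall x, ip2 x x = c * ip1 x x) ->
  forall x y, ip2 x y = c * ip1 x y.
Proof.
move=> sqr_eq x y; have := sqr_eq (x + y).
by rewrite (ipDD ip1P) (ipDD ip2P) !sqr_eq; lra.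
Qed.

Hypothesis orth : forall x y, ip1 x y = 0 -> ip2 x y = 0.

Lemma ip_sqr_eq x y : ip1 x x = ip1 y y -> ip2 x x = ip2 y y.
Proof.
move=> xy_eq; have : ip1 (x + y) (x - y) = 0.
  by rewrite (ipDl ip1P) !(ipDr ip1P) !(ipNr ip1P) (ipC ip1P y) xy_eq; ring.
by move/orth; rewrite (ipDl ip2P) !(ipDr ip2P) !(ipNr ip2P) (ipC ip2P y); lra.
Qed.

Lemma ip_sqr_proportional : exists2 c, 0 < c & forall x, ip2 x x = c * ip1 x x.
Proof.
have [[x0 x0_neq0]|all0] := pselect (exists x0 : V, x0 != 0); last first.
  exists 1 => // x; have -> : x = 0 by apply/eqP/negPn/negP => x0; apply: all0; exists x.
  by rewrite (ip0l ip1P) (ip0l ip2P) mulr0.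
have [n1 n2] := (ip_gt0 ip1P x0_neq0, ip_gt0 ip2P x0_neq0).
exists (ip2 x0 x0 / ip1 x0 x0); first by rewrite divr_gt0.
move=> x; have [->|x_neq0] := eqVneq x 0; first by rewrite !(ip0l ip1P) (ip0l ip2P) mulr0.
have xx_gt0 := ip_gt0 ip1P x_neq0.
pose t := Num.sqrt (ip1 x0 x0 / ip1 x x).
have tt : t * t = ip1 x0 x0 / ip1 x x by rewrite -expr2 sqr_sqrtr // divr_ge0 ?ltW.
have /ip_sqr_eq : ip1 (t *: x) (t *: x) = ip1 x0 x0.
  by rewrite (ipZl ip1P) (ipZr ip1P) mulrA tt divfK ?lt0r_neq0.
by rewrite (ipZl ip2P) (ipZr ip2P) mulrA tt => <-; field; rewrite !lt0r_neq0.
Qed.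

Lemma orthogonality_preserving_proportional :
  exists c, 0 < c /\ forall x y, ip2 x y = c * ip1 x y.
Proof.
have [c c_gt0 sqr_eq] := ip_sqr_proportional.
by exists c; split=> //; apply: ip_eq_scale_of_sqr.
Qed.

End Proportional.

Theorem mainTheorem5 (R : realType) (V : lmodType R) (ip1 ip2 : V -> V -> R)
  (theta0 : R) :
  is_inner_product ip1 -> is_inner_product ip2 ->
  0 < theta0 -> theta0 < pi ->
  (forall x y : V, x != 0 -> y != 0 ->
     (ip_angle ip1 x y = theta0 <-> ip_angle ip2 x y = theta0)) ->
  exists c : R, 0 < c /\ forall x y : V, ip2 x y = c * ip1 x y.
Proof.
move=> ip1P ip2P th_gt0 th_ltpi angle_eq.
apply: (orthogonality_preserving_proportional ip1P ip2P).
exact: angle_preserving_orthogonal angle_eq.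
Qed.
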